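(* Suppose $F$ is regular, i.e., $r''$ is bounded above on some neighborhood $(1-\delta,1)$ of $1$. Define \[ k=\sup\Big\{\alpha>1:\ r(v)r''(v)+r'(v)\le 1 \text{ for all } v\in(0,1) \text{ with } \psi(v)\ge \tfrac1\alpha\Big\}\in(1,\infty]. \] If $q_h\le kc$, then \[ r(v)r''(v)+r'(v)\le 1 \quad\text{for all } v\in\big(\overline p(q_h),\overline p(q_\ell)\big). \]
   Context: Let $0<q_\ell<q_h<\infty$, $Q=[q_\ell,q_h]$, and let $c$ be a real number with $0<c<q_\ell$. Let $F$ be a probability distribution on $[0,1]$ with support $[0,1]$ admitting a twice continuously differentiable density $f:(0,1)\to\mathbb{R}_{>0}$. Define the inverse hazard rate $r(v)=(1-F(v))/f(v)$ and the virtual valuation $\psi(v)=v-r(v)$ on $(0,1)$, and assume $\psi'(v)>0$ whenever $\psi(v)>0$. For $q\in Q$, $p(q)$ is the unique maximizer over $p\in\mathbb{R}$ of $(p-c)\big(1-F(p/q)\big)$, and $\overline p(q)=p(q)/q$. *)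

From Stdlib Require Import Reals.
From Coquelicot Require Import Coquelicot.
Open Scope R_scope.

Definition cdf_with_density (F f : R -> R) : Prop :=
  (forall v, continuous F v) /\
  (forall v, v <= 0 -> F v = 0) /\
  (forall v, 1 <= v -> F v = 1) /\
  (forall v, 0 < v < 1 -> is_derive F v (f v)) /\
  (forall v, 0 < v < 1 -> 0 < f v) /\
  (forall v, 0 < v < 1 ->
     ex_derive f v /\ ex_derive (Derive f) v /\
     continuous (Derive (Derive f)) v).

Definition inv_hazard (F f : R -> R) (v : R) : R := (1 - F v) / f v.
Definition virt_val (F f : R -> R) (v : R) : R := v - inv_hazard F f v.

Definition regular (F f : R -> R) : Prop :=
  exists delta M, 0 < delta /\
    forall v, 1 - delta < v < 1 ->
      Derive (Derive (inv_hazard F f)) v <= M.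

Definition cond_at (F f : R -> R) (v : R) : Prop :=
  inv_hazard F f v * Derive (Derive (inv_hazard F f)) v
    + Derive (inv_hazard F f) v <= 1.

Definition k_const (F f : R -> R) : Rbar :=
  Lub_Rbar (fun alpha => 1 < alpha /\
     forall v, 0 < v < 1 -> / alpha <= virt_val F f v -> cond_at F f v).

(* seller's objective for quality q at price x *)
Definition profit (F : R -> R) (c q x : R) : R := (x - c) * (1 - F (x / q)).

(** At an optimal price the first-order condition reads ψ(p̄(q)) = c/q.  As ψ
    is increasing wherever it is positive, every v > p̄(q_h) has ψ(v) > c/q_h,
    i.e. 1/ψ(v) < q_h/c <= k.  Hence some α in the set defining k exceeds
    1/ψ(v), so ψ(v) >= 1/α and the condition r r'' + r' <= 1 holds at v. *)
From Stdlib Require Import Reals Lra Classical.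
From Coquelicot Require Import Coquelicot.
Open Scope R_scope.

Lemma is_derive_pos_gt_right (g : R -> R) (x l b : R) :
  is_derive g x l -> 0 < l -> x < b -> exists y, x < y <= b /\ g x < g y.
Proof.
  intros Hd Hl Hxb.
  apply is_derive_Reals in Hd.
  destruct (Hd (l / 2) ltac:(lra)) as [[d Hd0] Hquot]; simpl in Hquot.
  set (h := Rmin (d / 2) (b - x)).
  assert (Hh0 : 0 < h) by (apply Rmin_pos; lra).
  assert (Hhd : h <= d / 2) by apply Rmin_l.
  assert (Hhb : h <= b - x) by apply Rmin_r.
  assert (Hq : Rabs ((g (x + h) - g x) / h - l) < l / 2).
  { apply Hquot; [lra | rewrite Rabs_pos_eq; lra]. }
  apply Rabs_def2 in Hq.
  exists (x + h); split; [lra |].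
  assert (Hslope : 0 < (g (x + h) - g x) / h) by lra.
  assert (0 < g (x + h) - g x).
  { replace (g (x + h) - g x) with ((g (x + h) - g x) / h * h) by (field; lra).
    apply Rmult_lt_0_compat; lra. }
  lra.
Qed.

(* A maximum of g on [a, b] at a point below b contradicts a positive
   derivative there; so the maximum sits at b and exceeds g a strictly. *)
Lemma lt_of_deriv_pos_above_start (g : R -> R) (a b : R) :
  a < b -> (forall x, a <= x <= b -> continuity_pt g x) ->
  (forall x, a <= x < b -> g a <= g x -> exists l, is_derive g x l /\ 0 < l) ->
  g a < g b.
Proof.
  intros Hab Hcont Hderiv.
  destruct (continuity_ab_maj g a b ltac:(lra) Hcont) as [M [HM HMab]].
  assert (HaM : g a <= g M) by (apply HM; lra).
  destruct (Req_dec M b) as [-> | HMb].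
  - destruct (Rle_lt_or_eq_dec _ _ HaM) as [Hlt | Heq]; [exact Hlt |].
    destruct (Hderiv a ltac:(lra) ltac:(lra)) as [l [Hl Hl0]].
    destruct (is_derive_pos_gt_right g a l b Hl Hl0 Hab) as [y [Hy Hgy]].
    assert (g y <= g b) by (apply HM; lra).
    lra.
  - destruct (Hderiv M ltac:(lra) HaM) as [l [Hl Hl0]].
    destruct (is_derive_pos_gt_right g M l b Hl Hl0 ltac:(lra)) as [y [Hy Hgy]].
    assert (g y <= g M) by (apply HM; lra).
    lra.
Qed.

Section Distribution.

Variables F f : R -> R.
Hypothesis HF : cdf_with_density F f.

Lemma cdf_lt_1 (v : R) : 0 < v < 1 -> F v < 1.
Proof.
  destruct HF as [Hcont [_ [H1 [Hderiv [Hpos _]]]]]; intros Hv.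
  rewrite <- (H1 1) by lra.
  apply lt_of_deriv_pos_above_start; [lra | |].
  - intros x _; apply continuity_pt_filterlim, Hcont.
  - intros x Hx _; exists (f x); split; [apply Hderiv | apply Hpos]; lra.
Qed.

Lemma ex_derive_virt_val (v : R) : 0 < v < 1 -> ex_derive (virt_val F f) v.
Proof.
  destruct HF as [_ [_ [_ [Hderiv [Hpos Hsmooth]]]]]; intros Hv.
  unfold virt_val, inv_hazard; auto_derive.
  repeat split.
  - eexists; apply Hderiv; lra.
  - apply Hsmooth; lra.
  - specialize (Hpos v Hv); lra.
Qed.

Lemma virt_val_lt_of_pos (w v : R) :
  (forall x, 0 < x < 1 -> 0 < virt_val F f x -> 0 < Derive (virt_val F f) x) ->
  0 < w -> w < v < 1 -> 0 < virt_val F f w -> virt_val F f w < virt_val F f v.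
Proof.
  intros Hmono Hw Hwv Hpsi.
  apply lt_of_deriv_pos_above_start; [lra | |].
  - intros x Hx; apply continuity_pt_filterlim.
    apply (@ex_derive_continuous R_AbsRing R_NormedModule), ex_derive_virt_val; lra.
  - intros x Hx Hle; exists (Derive (virt_val F f) x); split.
    + apply Derive_correct, ex_derive_virt_val; lra.
    + apply Hmono; lra.
Qed.

Section OptimalPrice.

Variables c q p : R.
Hypothesis Hc : 0 < c.
Hypothesis Hcq : c < q.
Hypothesis Hopt : forall x, x <> p -> profit F c q x < profit F c q p.

Let profit_ratio (t : R) : R := (q * t - c) * (1 - F t).

Lemma profit_ratioE (x : R) : profit F c q x = profit_ratio (x / q).
Proof.
  unfold profit, profit_ratio; f_equal; f_equal; field; lra.
Qed.

Lemma profit_ratio_le_optimal (t : R) : profit_ratio t <= profit_ratio (p / q).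
Proof.
  rewrite <- profit_ratioE.
  replace t with (q * t / q) by (field; lra); rewrite <- profit_ratioE.
  destruct (Req_dec (q * t) p) as [-> | Hne]; [lra |].
  left; apply Hopt, Hne.
Qed.

(* The profit at the price ratio midway between c/q and 1 is positive, hence
   so is the optimal profit; this rules out ratios outside (c/q, 1). *)
Lemma optimal_price_ratio_bounds : c / q < p / q < 1.
Proof.
  assert (Hcq1 : c / q < 1)
    by (apply Rmult_lt_reg_r with q; [lra | field_simplify; lra]).
  assert (Hcq0 : 0 < c / q) by (apply Rdiv_lt_0_compat; lra).
  set (w := (c / q + 1) / 2).
  assert (Hw : 0 < profit_ratio w).
  { unfold profit_ratio; apply Rmult_lt_0_compat.
    - replace (q * w - c) with (q * (w - c / q)) by (field; lra).
      apply Rmult_lt_0_compat; unfold w; lra.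
    - assert (F w < 1) by (apply cdf_lt_1; unfold w; lra); lra. }
  pose proof (profit_ratio_le_optimal w) as Hpos.
  destruct HF as [_ [H0 [H1 _]]].
  set (v := p / q) in *; unfold profit_ratio in Hw, Hpos.
  assert (Hv1 : v < 1).
  { destruct (Rlt_or_le v 1) as [? | Hv]; [assumption |].
    rewrite (H1 v Hv) in Hpos; lra. }
  split; [| exact Hv1].
  destruct (Rlt_or_le (c / q) v) as [? | Hv]; [assumption | exfalso].
  assert (q * v - c <= 0).
  { replace c with (q * (c / q)) by (field; lra).
    assert (q * v <= q * (c / q)) by (apply Rmult_le_compat_l; lra); lra. }
  destruct (Rle_or_lt v 0) as [Hv0 | Hv0].
  - rewrite (H0 v Hv0) in Hpos; nra.
  - assert (F v < 1) by (apply cdf_lt_1; lra); nra.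
Qed.

Lemma virt_val_optimal_price_ratio : virt_val F f (p / q) = c / q.
Proof.
  destruct optimal_price_ratio_bounds as [Hlo Hhi].
  assert (Hcq0 : 0 < c / q) by (apply Rdiv_lt_0_compat; lra).
  set (v := p / q) in *.
  destruct HF as [_ [_ [_ [Hderiv [Hpos _]]]]].
  assert (Hfv : 0 < f v) by (apply Hpos; lra).
  set (l := q * (1 - F v) - (q * v - c) * f v).
  assert (Hl : is_derive profit_ratio v l).
  { unfold profit_ratio, l; auto_derive.
    - exists (f v); apply Hderiv; lra.
    - replace (Derive (fun x => F x) v) with (f v)
        by (symmetry; apply is_derive_unique, Hderiv; lra).
      ring. }
  assert (Hfoc : l = 0).
  { apply is_derive_Reals in Hl.
    exact (deriv_maximum profit_ratio (v - 1) (v + 1) v (exist _ l Hl)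
             ltac:(lra) ltac:(lra) (fun x _ _ => profit_ratio_le_optimal x)). }
  unfold virt_val, inv_hazard, l in *.
  apply Rmult_eq_reg_r with (q * f v); [| nra].
  field_simplify; [nra | lra | lra].
Qed.

End OptimalPrice.

Lemma cond_at_of_inv_virt_val_lt_k (v : R) :
  0 < v < 1 -> 0 < virt_val F f v ->
  Rbar_lt (Finite (/ virt_val F f v)) (k_const F f) -> cond_at F f v.
Proof.
  intros Hv Hpsi Hk.
  set (E := fun alpha => 1 < alpha /\
     forall v, 0 < v < 1 -> / alpha <= virt_val F f v -> cond_at F f v).
  destruct (classic (exists a, E a /\ / virt_val F f v < a))
    as [[a [[Ha1 Hcond] Hlt]] | Hnone].
  - apply Hcond; [exact Hv |].
    rewrite <- (Rinv_inv (virt_val F f v)).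
    apply Rlt_le, Rinv_lt_contravar; [| exact Hlt].
    apply Rmult_lt_0_compat; [apply Rinv_0_lt_compat |]; lra.
  - exfalso.
    assert (Hub : is_ub_Rbar E (/ virt_val F f v)).
    { intros a Ea; simpl; apply Rnot_lt_le; intros Hlt.
      apply Hnone; exists a; split; assumption. }
    apply (Rbar_lt_not_le _ _ Hk), (proj2 (Lub_Rbar_correct E)), Hub.
Qed.

End Distribution.

Lemma Rbar_le_div_of_le_mult (x c : R) (k : Rbar) :
  0 < c -> Rbar_le (Finite x) (Rbar_mult k (Finite c)) ->
  Rbar_le (Finite (x / c)) k.
Proof.
  intros Hc; destruct k as [k | |]; simpl; trivial.
  - intros Hle; apply Rmult_le_reg_r with c; [exact Hc |].
    unfold Rdiv; rewrite Rmult_assoc, Rinv_l, Rmult_1_r; lra.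
  - destruct (Rle_dec 0 c) as [H | H]; [| lra].
    destruct (Rle_lt_or_eq_dec 0 c H); simpl; lra.
Qed.

Theorem proposition2 (F f : R -> R) (ql qh c : R) (p : R -> R) :
  0 < ql -> ql < qh -> 0 < c -> c < ql ->
  cdf_with_density F f ->
  (forall v, 0 < v < 1 -> 0 < virt_val F f v ->
     0 < Derive (virt_val F f) v) ->
  (* p q is the unique maximizer of (x - c)(1 - F(x/q)) over x in R, q in Q *)
  (forall q, ql <= q <= qh ->
     forall x, x <> p q -> profit F c q x < profit F c q (p q)) ->
  regular F f ->
  Rbar_le (Finite qh) (Rbar_mult (k_const F f) (Finite c)) ->
  forall v, p qh / qh < v < p ql / ql -> cond_at F f v.
Proof.
  intros Hql Hqlh Hc Hcl HF Hmono Hopt _ Hk v Hv.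
  assert (Hoptl := Hopt ql ltac:(lra)); assert (Hopth := Hopt qh ltac:(lra)).
  destruct (optimal_price_ratio_bounds F f HF c ql (p ql) Hc Hcl Hoptl) as [_ Hl1].
  destruct (optimal_price_ratio_bounds F f HF c qh (p qh) Hc ltac:(lra) Hopth)
    as [Hh0 _].
  assert (Hch : 0 < c / qh) by (apply Rdiv_lt_0_compat; lra).
  assert (Hpsi : c / qh < virt_val F f v).
  { pose proof (virt_val_optimal_price_ratio F f HF c qh (p qh) Hc ltac:(lra) Hopth)
      as Hfoc.
    rewrite <- Hfoc; apply (virt_val_lt_of_pos F f HF); [exact Hmono | lra | lra | lra]. }
  apply cond_at_of_inv_virt_val_lt_k; [lra | lra |].
  apply Rbar_lt_le_trans with (Finite (qh / c));
    [| exact (Rbar_le_div_of_le_mult _ _ _ Hc Hk)].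
  simpl; rewrite <- (Rinv_div c qh).
  apply Rinv_lt_contravar; [apply Rmult_lt_0_compat |]; lra.
Qed.
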